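(* Assume $\Delta=0$. Let $\lambda_1,\lambda_2,\lambda_3\in K$ with $\lambda_ic_i\in N$ and $s_i':=s_i\nu_i$ where $\nu_i\in N$ corresponds to $\lambda_ic_i$. (1) If $p=2p_1$ is even, then $(s_1's_2')^{p_1}=(s_1s_2)^{p_1}\nu$ with $\nu=\frac{2}{4-\alpha}\big((2\lambda_1+\lambda_2)c_1+(\alpha\lambda_1+2\lambda_2)c_2\big)=\Big(-2\lambda_2,\ \frac{2(2\beta+\alpha l)}{4-\alpha}\lambda_1+\frac{2(\beta+2l)}{4-\alpha}\lambda_2\Big)$. (2) If $q=2q_1$ is even, then $(s_1's_3')^{q_1}=(s_1s_3)^{q_1}\nu'$ with $\nu'=\frac{2}{4-\beta}\big((2\lambda_1+\lambda_3)c_1+(\beta\lambda_1+2\lambda_3)c_3\big)=\Big(\frac{2(2\alpha+\beta m)}{4-\beta}\lambda_1+\frac{2(\alpha+2m)}{4-\beta}\lambda_3,\ -2\lambda_3\Big)$. (3) If $r=2r_1$ is even, then $(s_2's_3')^{r_1}=(s_2s_3)^{r_1}\nu''$ with $\nu''=\frac{2}{4-\gamma}\big((2\lambda_2+m\lambda_3)c_2+(l\lambda_2+2\lambda_3)c_3\big)=(-2\lambda_2,-2\lambda_3)$.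
   Context: Setting. Let $p,q,r\ge 3$ be integers and $W=W(p,q,r)$ the Coxeter group with generators $s_1,s_2,s_3$ and relations $s_i^2=1$, $(s_1s_2)^p=(s_1s_3)^q=(s_2s_3)^r=1$. Let $\alpha=4\cos^2(\pi k_1/p)$, $\beta=4\cos^2(\pi k_2/q)$, $\gamma=4\cos^2(\pi k_3/r)$ with $\gcd(k_1,p)=\gcd(k_2,q)=\gcd(k_3,r)=1$ (so $0<\alpha,\beta,\gamma<4$), and let $l,m\in\mathbb{C}$ with $lm=\gamma$. Let $K\subset\mathbb{C}$ be a field containing $\alpha,\beta,\gamma,l,m$, and $M$ a $3$-dimensional $K$-vector space with basis $(a_1,a_2,a_3)$. The reflection representation $R:W\to GL(M)$ with parameters $(\alpha,\beta,\gamma;l,m)$ is defined by: for $x=\lambda_1a_1+\lambda_2a_2+\lambda_3a_3$, $R(s_1)x=x-(2\lambda_1-\alpha\lambda_2-\beta\lambda_3)a_1$, $R(s_2)x=x-(-\lambda_1+2\lambda_2-l\lambda_3)a_2$, $R(s_3)x=x-(-\lambda_1-m\lambda_2+2\lambda_3)a_3$. Put $G=R(W)$ and write $s_i$ for $R(s_i)$. Let $\Delta=8-2\alpha-2\beta-2\gamma-(\alpha l+\beta m)$; $R$ is reducible iff $\Delta=0$. Reducible setting. Assume $\Delta=0$. Put $b=(4-\gamma)a_1+(l+2)a_2+(m+2)a_3$; then the space of $G$-fixed vectors is $C_M(G)=Kb$ and $(b,a_2,a_3)$ is a basis of $M$. Let $N=N(G)$ be the subgroup of elements of $G$ acting trivially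 on $M/C_M(G)$. Each $\zeta\in N$ satisfies $\zeta(b)=b$, $\zeta(a_2)=a_2+\lambda b$, $\zeta(a_3)=a_3+\mu b$ for a unique $(\lambda,\mu)\in K^2$; the map $\zeta\mapsto(\lambda,\mu)$ is an injective group homomorphism $N\to (K^2,+)$, through which $N$ is identified with an additive subgroup of $K^2$ (and written additively). Put $c_1=(\alpha,\beta)$, $c_2=(-2,l)$, $c_3=(m,-2)\in K^2$. *)

From HB Require Import structures.
From mathcomp Require Import all_boot all_order all_algebra.
Set Implicit Arguments. Unset Strict Implicit. Unset Printing Implicit Defensive.
Import Order.TTheory GRing.Theory Num.Theory.
Local Open Scope ring_scope.

Section Defs.
Variable C : numClosedFieldType.

(* 4 cos^2(pi k/p) = 2 + zeta + zeta^-1 with zeta = exp(2 pi i k/p),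
   a primitive p-th root of unity iff gcd(k,p) = 1. *)
Definition cos2_param (z : C) : C := 2 + z + z^-1.

(* coordinates w.r.t. the basis (a1,a2,a3); column vectors *)
Definition avec (i : nat) : 'cV[C]_3 := delta_mx (inord i) 0.
Definition row3 (x y z : C) : 'rV[C]_3 := \row_(j < 3) [:: x; y; z]`_j.
Definition pair2 (x y : C) : 'rV[C]_2 := \row_(j < 2) [:: x; y]`_j.

Definition S1 (al be : C) : 'M[C]_3 := 1%:M - avec 0 *m row3 2 (- al) (- be).
Definition S2 (l : C) : 'M[C]_3 := 1%:M - avec 1 *m row3 (-1) 2 (- l).
Definition S3 (m : C) : 'M[C]_3 := 1%:M - avec 2 *m row3 (-1) (- m) 2.

(* G = R(W): the set of all products of the generators (s_i^2 = 1) *)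
Inductive genG (T1 T2 T3 : 'M[C]_3) : 'M[C]_3 -> Prop :=
  | genG1 : genG T1 T2 T3 1%:M
  | genG_1 g : genG T1 T2 T3 g -> genG T1 T2 T3 (T1 *m g)
  | genG_2 g : genG T1 T2 T3 g -> genG T1 T2 T3 (T2 *m g)
  | genG_3 g : genG T1 T2 T3 g -> genG T1 T2 T3 (T3 *m g).

Definition inG (al be ga l m : C) (g : 'M[C]_3) : Prop :=
  genG (S1 al be) (S2 l) (S3 m) g.

Definition Delta (al be ga l m : C) : C :=
  8 - 2 * al - 2 * be - 2 * ga - (al * l + be * m).

Definition bvec (ga l m : C) : 'cV[C]_3 :=
  (4 - ga) *: avec 0 + (l + 2) *: avec 1 + (m + 2) *: avec 2.

(* g is an element of N(G) corresponding to the pair P = (lambda, mu):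
   g in G, g b = b, g a2 = a2 + lambda b, g a3 = a3 + mu b. *)
Definition inN_with (al be ga l m : C) (g : 'M[C]_3) (P : 'rV[C]_2) : Prop :=
  [/\ inG al be ga l m g,
      g *m bvec ga l m = bvec ga l m,
      g *m avec 1 = avec 1 + P 0 0 *: bvec ga l m &
      g *m avec 2 = avec 2 + P 0 1 *: bvec ga l m].

Definition c1 (al be : C) : 'rV[C]_2 := pair2 al be.
Definition c2 (l : C) : 'rV[C]_2 := pair2 (-2) l.
Definition c3 (m : C) : 'rV[C]_2 := pair2 m (-2).

End Defs.

From HB Require Import structures.
From mathcomp Require Import all_boot all_order all_algebra.
From mathcomp Require Import ring.
Import Order.TTheory GRing.Theory Num.Theory.

(* Since Delta = 0, every element of G fixes b, and an element of N with
   pair P is the transvection 1 + b phi_P, where phi_P is the linear form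
   vanishing on b that takes the values P on a2, a3.  Writing t = s1 s2 and
   phi for the form of s1' s2' = t (1 + b phi) (obtained by pushing nu1 past
   s2), one gets (t (1 + b phi))^k = t^k (1 + b (phi + phi t + ... + phi t^(k-1))).
   The matrix t^2 - (al - 2) t + 1 has rank one with image K b (this is where
   Delta = 0 enters), so on forms vanishing on b, t acts with eigenvalues z and
   z^-1, where z is the primitive p-th root of unity defining al.
   For k = p/2 we have z^k = -1, hence phi t^k = -phi, and the geometric sum
   collapses to 2 phi (1 - t)^-1 = 2 phi ((3 - al) + t) / (4 - al), which is
   the form of the announced element of N. *)

Set Implicit Arguments.
Unset Strict Implicit.
Unset Printing Implicit Defensive.
Local Open Scope ring_scope.

Section Transvections.
Variables (R : pzRingType) (n : nat).
Implicit Types (s t : 'M[R]_n.+1) (b : 'cV[R]_n.+1) (phi psi : 'rV[R]_n.+1).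

Definition transv b phi : 'M[R]_n.+1 := 1%:M + b *m phi.

Lemma transv_fix b phi : phi *m b = 0 -> transv b phi *m b = b.
Proof. by move=> phib; rewrite mulmxDl mul1mx -mulmxA phib mulmx0 addr0. Qed.

Lemma transvD b phi psi : phi *m b = 0 ->
  transv b phi *m transv b psi = transv b (phi + psi).
Proof.
move=> phib; rewrite [transv b phi *m _]mulmxDr mulmx1 mulmxA transv_fix //.
by rewrite /transv mulmxDr -addrA.
Qed.

Lemma transv_mulmx s b phi : s *m b = b ->
  transv b phi *m s = s *m transv b (phi *m s).
Proof. by move=> sb; rewrite mulmxDl mulmxDr mul1mx mulmx1 -mulmxA -{1}sb !mulmxA. Qed.

Lemma transv_mulmx_mul s s' b phi phi' : s' *m b = b -> phi *m b = 0 ->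
  s *m transv b phi *m (s' *m transv b phi') = s *m s' *m transv b (phi *m s' + phi').
Proof.
move=> s'b phib; rewrite -!mulmxA; congr (_ *m _).
by rewrite mulmxA transv_mulmx // -mulmxA transvD // -mulmxA s'b.
Qed.

Definition orbit_sum t phi k : 'rV[R]_n.+1 := \sum_(i < k) phi *m t ^+ i.

Lemma orbit_sumS t phi k : orbit_sum t phi k.+1 = orbit_sum t phi k *m t + phi.
Proof.
rewrite /orbit_sum big_ord_recl expr0 mulmx1 addrC mulmx_suml.
by congr (_ + _); apply: eq_bigr => i _; rewrite exprSr -mulmxE mulmxA.
Qed.

Lemma orbit_sum_orth t b phi k : t *m b = b -> phi *m b = 0 ->
  orbit_sum t phi k *m b = 0.
Proof.
move=> tb phib; elim: k => [|k IHk]; first by rewrite /orbit_sum big_ord0 mul0mx.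
by rewrite orbit_sumS mulmxDl -mulmxA tb IHk phib addr0.
Qed.

Lemma expr_mulmx_transv t b phi k : t *m b = b -> phi *m b = 0 ->
  (t *m transv b phi) ^+ k = t ^+ k *m transv b (orbit_sum t phi k).
Proof.
move=> tb phib; elim: k => [|k IHk].
  by rewrite !expr0 /orbit_sum big_ord0 mul1mx /transv mulmx0 addr0.
by rewrite !exprSr IHk -!mulmxE transv_mulmx_mul ?orbit_sum_orth ?orbit_sumS.
Qed.

End Transvections.

Section HalfTurn.
Variables (K : fieldType) (n : nat).
Implicit Types (t : 'M[K]_n.+1) (phi u : 'rV[K]_n.+1) (s z : K).

Definition quad_mx t s : 'M[K]_n.+1 := t ^+ 2 - s *: t + 1%:M.

Lemma quad_mxC t s i : t ^+ i * quad_mx t s = quad_mx t s * t ^+ i.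
Proof.
rewrite /quad_mx mulrDr mulrBr mulrDl mulrBl mulr1 mul1r -!exprD addnC.
by rewrite -scalerAr -scalerAl -exprSr -exprS.
Qed.

Lemma mulmx_quad_mx phi t s :
  phi *m quad_mx t s = phi *m t *m t - s *: (phi *m t) + phi.
Proof. by rewrite /quad_mx expr2 -mulmxE mulmxDr mulmxBr mulmxA -scalemxAr mulmx1. Qed.

Lemma eigen_expr u t z k : u *m t = z *: u -> u *m t ^+ k = z ^+ k *: u.
Proof.
move=> ut; elim: k => [|k IHk]; first by rewrite !expr0 mulmx1 scale1r.
by rewrite exprSr -mulmxE mulmxA IHk -scalemxAl ut scalerA -exprSr.
Qed.

Lemma quad_eigen t phi z : z != 0 -> phi *m quad_mx t (z + z^-1) = 0 ->
  (phi *m t - z^-1 *: phi) *m t = z *: (phi *m t - z^-1 *: phi).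
Proof.
move=> z0; rewrite mulmx_quad_mx => /eqP; rewrite addr_eq0 subr_eq => /eqP ttE.
by rewrite mulmxBl ttE -scalemxAl; apply/rowP => j; rewrite !mxE; field.
Qed.

(* Decompose phi along the eigenvectors phi t - z^-1 phi and phi t - z phi. *)
Lemma half_turn t phi z k : z != 0 -> z ^+ 2 != 1 -> z ^+ k = -1 ->
  phi *m quad_mx t (z + z^-1) = 0 -> phi *m t ^+ k = - phi.
Proof.
move=> z0 z2 zk phiq.
have u_t := quad_eigen z0 phiq.
have := quad_eigen (invr_neq0 z0); rewrite invrK [z^-1 + z]addrC => /(_ t phi phiq) w_t.
have zVz : z - z^-1 != 0.
  by rewrite subr_eq0; apply: contra z2 => /eqP zE; rewrite expr2 {2}zE mulfV.
apply: (scalerI zVz); rewrite scalerN scalemxAl.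
have -> : (z - z^-1) *: phi = (phi *m t - z^-1 *: phi) - (phi *m t - z *: phi).
  by apply/rowP => j; rewrite !mxE; ring.
rewrite mulmxBl (eigen_expr _ u_t) (eigen_expr _ w_t) exprVn zk invrN1 !scaleN1r.
by apply/rowP => j; rewrite !mxE; ring.
Qed.

(* (1 - t) ((1 - s) + t) = (2 - s) - quad_mx t s, and quad_mx t s kills the
   orbit sum, so it inverts 1 - t on it. *)
Lemma orbit_sum_half_turn t phi s z k :
  z != 0 -> z ^+ 2 != 1 -> z ^+ k = -1 -> s = z + z^-1 -> phi *m quad_mx t s = 0 ->
  (2 - s) *: orbit_sum t phi k = 2 *: (phi *m ((1 - s)%:M + t)).
Proof.
move=> z0 z2 zk sE phiq; set U := orbit_sum t phi k.
have telescope : U - U *m t = phi - phi *m t ^+ k.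
  rewrite /U; elim: k {zk U} => [|k IHk].
    by rewrite /orbit_sum big_ord0 mul0mx expr0 mulmx1 !subrr.
  rewrite orbit_sumS mulmxDl opprD addrACA -mulmxBl IHk mulmxBl exprSr -mulmxE mulmxA.
  by apply/rowP => j; rewrite !mxE; ring.
have Uq : U *m quad_mx t s = 0.
  rewrite /U /orbit_sum mulmx_suml big1 // => i _.
  by rewrite -mulmxA mulmxE quad_mxC -mulmxE mulmxA phiq mul0mx.
have : (U - U *m t) *m ((1 - s)%:M + t) = (2 - s) *: U - U *m quad_mx t s.
  rewrite mulmx_quad_mx mulmxDr mul_mx_scalar !mulmxBl.
  set Ut := U *m t; set Utt := Ut *m t.
  by apply/rowP => j; rewrite !mxE; ring.
have phi_half : phi *m t ^+ k = - phi by apply: half_turn z0 z2 zk _; rewrite -sE.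
rewrite Uq subr0 telescope phi_half opprK => <-.
by rewrite scaler_nat mulr2n mulmxDl.
Qed.

End HalfTurn.

Section Matrix3.
Variable C : numClosedFieldType.
Implicit Types (a b c d e f g h k x y z u v w : C).

Definition mx3 a b c d e f g h k : 'M[C]_3 := \matrix_(i < 3, j < 3)
  nth 0 (nth [::] [:: [:: a; b; c]; [:: d; e; f]; [:: g; h; k]] i) j.
Definition cv3 x y z : 'cV[C]_3 := \col_(i < 3) [:: x; y; z]`_i.

Local Ltac entries :=
  apply/matrixP => -[[|[|[|?]]] ?] -[[|[|[|?]]] ?] //;
  rewrite !mxE ?big_ord_recr ?big_ord0 /= ?mxE /=.

Lemma mulmx3 a1 a2 a3 a4 a5 a6 a7 a8 a9 b1 b2 b3 b4 b5 b6 b7 b8 b9 :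
  mx3 a1 a2 a3 a4 a5 a6 a7 a8 a9 *m mx3 b1 b2 b3 b4 b5 b6 b7 b8 b9 =
  mx3 (a1*b1+a2*b4+a3*b7) (a1*b2+a2*b5+a3*b8) (a1*b3+a2*b6+a3*b9)
      (a4*b1+a5*b4+a6*b7) (a4*b2+a5*b5+a6*b8) (a4*b3+a5*b6+a6*b9)
      (a7*b1+a8*b4+a9*b7) (a7*b2+a8*b5+a9*b8) (a7*b3+a8*b6+a9*b9).
Proof. by entries; ring. Qed.

Lemma mulmxcv3 a1 a2 a3 a4 a5 a6 a7 a8 a9 x y z :
  mx3 a1 a2 a3 a4 a5 a6 a7 a8 a9 *m cv3 x y z =
  cv3 (a1*x+a2*y+a3*z) (a4*x+a5*y+a6*z) (a7*x+a8*y+a9*z).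
Proof. by entries; ring. Qed.

Lemma mulrow3mx a1 a2 a3 a4 a5 a6 a7 a8 a9 x y z :
  row3 x y z *m mx3 a1 a2 a3 a4 a5 a6 a7 a8 a9 =
  row3 (x*a1+y*a4+z*a7) (x*a2+y*a5+z*a8) (x*a3+y*a6+z*a9).
Proof. by entries; ring. Qed.

Lemma mulcv3row3 x y z u v w :
  cv3 x y z *m row3 u v w =
  mx3 (x*u) (x*v) (x*w) (y*u) (y*v) (y*w) (z*u) (z*v) (z*w).
Proof. by entries; ring. Qed.

Lemma mulrow3cv3 x y z u v w : row3 x y z *m cv3 u v w = (x*u+y*v+z*w)%:M.
Proof. by entries; ring. Qed.

Lemma addmx3 a1 a2 a3 a4 a5 a6 a7 a8 a9 b1 b2 b3 b4 b5 b6 b7 b8 b9 :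
  mx3 a1 a2 a3 a4 a5 a6 a7 a8 a9 + mx3 b1 b2 b3 b4 b5 b6 b7 b8 b9 =
  mx3 (a1+b1) (a2+b2) (a3+b3) (a4+b4) (a5+b5) (a6+b6) (a7+b7) (a8+b8) (a9+b9).
Proof. by entries. Qed.

Lemma oppmx3 a1 a2 a3 a4 a5 a6 a7 a8 a9 :
  - mx3 a1 a2 a3 a4 a5 a6 a7 a8 a9 =
  mx3 (-a1) (-a2) (-a3) (-a4) (-a5) (-a6) (-a7) (-a8) (-a9).
Proof. by entries. Qed.

Lemma scalemx3 c a1 a2 a3 a4 a5 a6 a7 a8 a9 :
  c *: mx3 a1 a2 a3 a4 a5 a6 a7 a8 a9 =
  mx3 (c*a1) (c*a2) (c*a3) (c*a4) (c*a5) (c*a6) (c*a7) (c*a8) (c*a9).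
Proof. by entries. Qed.

Lemma addcv3 x y z u v w : cv3 x y z + cv3 u v w = cv3 (x+u) (y+v) (z+w).
Proof. by entries. Qed.

Lemma oppcv3 x y z : - cv3 x y z = cv3 (-x) (-y) (-z).
Proof. by entries. Qed.

Lemma scalecv3 c x y z : c *: cv3 x y z = cv3 (c*x) (c*y) (c*z).
Proof. by entries. Qed.

Lemma addrow3 x y z u v w : row3 x y z + row3 u v w = row3 (x+u) (y+v) (z+w).
Proof. by entries. Qed.

Lemma scalerow3 c x y z : c *: row3 x y z = row3 (c*x) (c*y) (c*z).
Proof. by entries. Qed.

Lemma scalar_mx3 c : c%:M = mx3 c 0 0 0 c 0 0 0 c.
Proof. by entries. Qed.

Lemma avec0E : avec C 0 = cv3 1 0 0.
Proof. by entries; rewrite -!val_eqE /= inordK. Qed.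

Lemma avec1E : avec C 1 = cv3 0 1 0.
Proof. by entries; rewrite -!val_eqE /= inordK. Qed.

Lemma avec2E : avec C 2 = cv3 0 0 1.
Proof. by entries; rewrite -!val_eqE /= inordK. Qed.

Lemma bvecE ga l m : bvec ga l m = cv3 (4 - ga) (l + 2) (m + 2).
Proof. by rewrite /bvec avec0E avec1E avec2E !scalecv3 !addcv3; congr cv3; ring. Qed.

Lemma S1E al be : S1 al be = mx3 (-1) al be 0 1 0 0 0 1.
Proof. by rewrite /S1 avec0E mulcv3row3 scalar_mx3 oppmx3 addmx3; congr mx3; ring. Qed.

Lemma S2E l : S2 l = mx3 1 0 0 1 (-1) l 0 0 1.
Proof. by rewrite /S2 avec1E mulcv3row3 scalar_mx3 oppmx3 addmx3; congr mx3; ring. Qed.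

Lemma S3E m : S3 m = mx3 1 0 0 0 1 0 1 m (-1).
Proof. by rewrite /S3 avec2E mulcv3row3 scalar_mx3 oppmx3 addmx3; congr mx3; ring. Qed.

Lemma mx3_col_ext (g h : 'M[C]_3) :
  g *m avec C 0 = h *m avec C 0 -> g *m avec C 1 = h *m avec C 1 ->
  g *m avec C 2 = h *m avec C 2 -> g = h.
Proof.
move=> e0 e1 e2; apply/matrixP => i j.
have : g *m avec C j = h *m avec C j by case: j => [[|[|[|//]]] ?].
move/(congr1 (fun v : 'cV[C]_3 => v i 0)).
by rewrite /avec inord_val -!colE !mxE.
Qed.

End Matrix3.

Ltac mx3_normalize :=
  rewrite ?bvecE ?avec0E ?avec1E ?avec2E ?S1E ?S2E ?S3E ?scalar_mx3
    ?(mulcv3row3, mulmx3, mulmxcv3, mulrow3mx, addmx3, oppmx3, scalemx3,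
      addcv3, oppcv3, scalecv3, addrow3, scalerow3).

Section GeneratedGroup.
Variables (C : numClosedFieldType) (T1 T2 T3 : 'M[C]_3).
Implicit Types (g h : 'M[C]_3).

Lemma genGM g h : genG T1 T2 T3 g -> genG T1 T2 T3 h -> genG T1 T2 T3 (g *m h).
Proof.
move=> Gg Gh; elim: Gg => [|{}g _ IHg|{}g _ IHg|{}g _ IHg]; rewrite ?mul1mx // -mulmxA.
- exact: genG_1.
- exact: genG_2.
- exact: genG_3.
Qed.

Lemma genGX g k : genG T1 T2 T3 g -> genG T1 T2 T3 (g ^+ k).
Proof.
move=> Gg; elim: k => [|k IHk]; first by rewrite expr0; apply: genG1.
by rewrite exprS -mulmxE; apply: genGM.
Qed.

Lemma genGT1 : genG T1 T2 T3 T1.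
Proof. by have := genG_1 (genG1 T1 T2 T3); rewrite mulmx1. Qed.

Lemma genGT2 : genG T1 T2 T3 T2.
Proof. by have := genG_2 (genG1 T1 T2 T3); rewrite mulmx1. Qed.

Lemma genGT3 : genG T1 T2 T3 T3.
Proof. by have := genG_3 (genG1 T1 T2 T3); rewrite mulmx1. Qed.

End GeneratedGroup.

Section PrimitiveRoots.
Variables (R : idomainType) (p : nat) (z : R).
Hypotheses (p_gt2 : (2 < p)%N) (prim_z : p.-primitive_root z).

Lemma prim_root_neq0 : z != 0.
Proof. by rewrite (prim_root_eq0 prim_z) -lt0n ltnW // ltnW. Qed.

Lemma prim_root_neq1 : z != 1.
Proof.
by rewrite -[z]expr1 -(expr0 z) (eq_prim_root_expr prim_z) mod0n modn_small // ltnW.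
Qed.

Lemma prim_root_sqr_neq1 : z ^+ 2 != 1.
Proof. by rewrite -(expr0 z) (eq_prim_root_expr prim_z) mod0n modn_small. Qed.

Lemma prim_root_half k : p = (2 * k)%N -> z ^+ k = -1.
Proof.
move=> p_2k; have /eqP := prim_expr_order prim_z.
rewrite p_2k mulnC exprM sqrf_eq1 => /orP[zk1|/eqP //].
have k_gt0 : (0 < k)%N by rewrite lt0n; apply: contraTneq p_gt2 => k0; rewrite p_2k k0.
move: zk1; rewrite -(prim_order_dvd prim_z) p_2k => /(dvdn_leq k_gt0).
by rewrite leqNgt ltn_Pmull.
Qed.

End PrimitiveRoots.

Lemma cos2_param_sub2 (C : numClosedFieldType) (z : C) : cos2_param z - 2 = z + z^-1.
Proof. by rewrite /cos2_param; ring. Qed.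

Lemma cos2_param_neq4 (C : numClosedFieldType) p (z : C) :
  (2 < p)%N -> p.-primitive_root z -> 4 - cos2_param z != 0.
Proof.
move=> p_gt2 prim_z.
have z0 := prim_root_neq0 p_gt2 prim_z; have z1 := prim_root_neq1 p_gt2 prim_z.
have -> : 4 - cos2_param z = - ((z - 1) ^+ 2 / z) by rewrite /cos2_param; field.
by rewrite oppr_eq0 mulf_neq0 ?invr_eq0 ?expf_neq0 ?subr_eq0.
Qed.

Section ReducibleRepresentation.
Variables (C : numClosedFieldType) (al be ga l m : C).
Local Notation b := (bvec ga l m).
Implicit Types (P : 'rV[C]_2) (phi : 'rV[C]_3) (g : 'M[C]_3).

Lemma S1_bvec : S1 al be *m b = b - Delta al be ga l m *: avec C 0.
Proof. by rewrite /Delta; mx3_normalize; congr cv3; ring. Qed.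

Lemma S2_bvec : S2 l *m b = b - (ga - l * m) *: avec C 1.
Proof. by mx3_normalize; congr cv3; ring. Qed.

Lemma S3_bvec : S3 m *m b = b - (ga - l * m) *: avec C 2.
Proof. by mx3_normalize; congr cv3; ring. Qed.

Lemma S1K : S1 al be *m S1 al be = 1%:M.
Proof. by mx3_normalize; congr mx3; ring. Qed.

Lemma S2K : S2 l *m S2 l = 1%:M.
Proof. by mx3_normalize; congr mx3; ring. Qed.

Lemma S3K : S3 m *m S3 m = 1%:M.
Proof. by mx3_normalize; congr mx3; ring. Qed.

Lemma quad_mx_S1S2 : quad_mx (S1 al be *m S2 l) (al - 2) =
  cv3 (al * l + 2 * be) (be + 2 * l) (4 - al) *m row3 0 0 1.
Proof. by rewrite /quad_mx expr2 -mulmxE; mx3_normalize; congr mx3; ring. Qed.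

Lemma quad_mx_S1S3 : quad_mx (S1 al be *m S3 m) (be - 2) =
  cv3 (be * m + 2 * al) (4 - be) (al + 2 * m) *m row3 0 1 0.
Proof. by rewrite /quad_mx expr2 -mulmxE; mx3_normalize; congr mx3; ring. Qed.

Lemma quad_mx_S2S3 : quad_mx (S2 l *m S3 m) (l * m - 2) =
  cv3 (4 - l * m) (l + 2) (m + 2) *m row3 1 0 0.
Proof. by rewrite /quad_mx expr2 -mulmxE; mx3_normalize; congr mx3; ring. Qed.

(* The linear form vanishing on b whose values on a2, a3 are P. *)
Definition phiv P : 'rV[C]_3 :=
  row3 (- (P 0 0 * (l + 2) + P 0 1 * (m + 2)) / (4 - ga)) (P 0 0) (P 0 1).

Hypothesis ga_neq4 : 4 - ga != 0.

Lemma phiv_orth P : phiv P *m b = 0.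
Proof. by rewrite bvecE mulrow3cv3 [_ + _](_ : _ = 0) ?raddf0 //; field. Qed.

Lemma transv_phiv P : [/\ transv b (phiv P) *m b = b,
  transv b (phiv P) *m avec C 1 = avec C 1 + P 0 0 *: b &
  transv b (phiv P) *m avec C 2 = avec C 2 + P 0 1 *: b].
Proof. by rewrite /transv /phiv; split; mx3_normalize; congr cv3; field. Qed.

(* a1 is a combination of b, a2, a3 since the a1-coordinate 4 - ga of b is nonzero. *)
Lemma eq_transv_phiv g P : g *m b = b ->
  g *m avec C 1 = avec C 1 + P 0 0 *: b -> g *m avec C 2 = avec C 2 + P 0 1 *: b ->
  g = transv b (phiv P).
Proof.
move=> gb ga1 ga2; have [tb ta1 ta2] := transv_phiv P.
apply: mx3_col_ext; rewrite ?ga1 ?ga2 ?ta1 ?ta2 //.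
have a0E : avec C 0 = (4 - ga)^-1 *: (b - (l + 2) *: avec C 1 - (m + 2) *: avec C 2).
  by mx3_normalize; congr cv3; field.
by rewrite a0E -!scalemxAr !mulmxBr -!scalemxAr gb ga1 ga2 tb ta1 ta2.
Qed.

Lemma inN_withE g P : inN_with al be ga l m g P -> g = transv b (phiv P).
Proof. by case=> _; apply: eq_transv_phiv. Qed.

Hypotheses (Delta0 : Delta al be ga l m = 0) (lm_ga : l * m = ga).

Lemma inG_fix g : inG al be ga l m g -> g *m b = b.
Proof.
elim=> [|h _ IHh|h _ IHh|h _ IHh]; rewrite ?mul1mx // -mulmxA IHh.
- by rewrite S1_bvec Delta0 scale0r subr0.
- by rewrite S2_bvec lm_ga subrr scale0r subr0.
- by rewrite S3_bvec lm_ga subrr scale0r subr0.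
Qed.

Lemma m_add2_neq0 : 4 - al != 0 -> m + 2 != 0.
Proof.
move=> al_neq4; have : (m + 2) * (al * l + 2 * be) = (4 - al) * (4 - ga).
  apply/eqP; rewrite -subr_eq0.
  have -> : (m + 2) * (al * l + 2 * be) - (4 - al) * (4 - ga) =
    -2 * Delta al be ga l m + al * (l * m - ga) by rewrite /Delta; ring.
  by rewrite Delta0 lm_ga subrr !mulr0 addr0.
move=> e; apply: contra_neq (mulf_neq0 al_neq4 ga_neq4) => m2.
by rewrite -e m2 mul0r.
Qed.

Lemma l_add2_neq0 : 4 - be != 0 -> l + 2 != 0.
Proof.
move=> be_neq4; have : (l + 2) * (be * m + 2 * al) = (4 - be) * (4 - ga).
  apply/eqP; rewrite -subr_eq0.
  have -> : (l + 2) * (be * m + 2 * al) - (4 - be) * (4 - ga) =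
    -2 * Delta al be ga l m + be * (l * m - ga) by rewrite /Delta; ring.
  by rewrite Delta0 lm_ga subrr !mulr0 addr0.
move=> e; apply: contra_neq (mulf_neq0 be_neq4 ga_neq4) => l2.
by rewrite -e l2 mul0r.
Qed.

Lemma beE : m + 2 != 0 -> be = (8 - 2 * al - 2 * ga - al * l) / (m + 2).
Proof.
move=> m2; apply: (mulIf m2); rewrite divfK //; apply/eqP; rewrite -subr_eq0.
have -> : be * (m + 2) - (8 - 2 * al - 2 * ga - al * l) = - Delta al be ga l m
  by rewrite /Delta; ring.
by rewrite Delta0 oppr0.
Qed.

Lemma alE : l + 2 != 0 -> al = (8 - 2 * be - 2 * ga - be * m) / (l + 2).
Proof.
move=> l2; apply: (mulIf l2); rewrite divfK //; apply/eqP; rewrite -subr_eq0.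
have -> : al * (l + 2) - (8 - 2 * be - 2 * ga - be * m) = - Delta al be ga l m
  by rewrite /Delta; ring.
by rewrite Delta0 oppr0.
Qed.

Lemma quad_mx_S1S2_orth : 4 - al != 0 -> forall phi, phi *m b = 0 ->
  phi *m quad_mx (S1 al be *m S2 l) (al - 2) = 0.
Proof.
move=> al_neq4 phi phib; have m2 := m_add2_neq0 al_neq4.
have wE : cv3 (al * l + 2 * be) (be + 2 * l) (4 - al) = ((4 - al) / (m + 2)) *: b.
  by rewrite (beE m2) -lm_ga; mx3_normalize; congr cv3; field.
by rewrite quad_mx_S1S2 mulmxA wE -scalemxAr phib scaler0 mul0mx.
Qed.

Lemma quad_mx_S1S3_orth : 4 - be != 0 -> forall phi, phi *m b = 0 ->
  phi *m quad_mx (S1 al be *m S3 m) (be - 2) = 0.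
Proof.
move=> be_neq4 phi phib; have l2 := l_add2_neq0 be_neq4.
have wE : cv3 (be * m + 2 * al) (4 - be) (al + 2 * m) = ((4 - be) / (l + 2)) *: b.
  by rewrite (alE l2) -lm_ga; mx3_normalize; congr cv3; field.
by rewrite quad_mx_S1S3 mulmxA wE -scalemxAr phib scaler0 mul0mx.
Qed.

Lemma quad_mx_S2S3_orth phi : phi *m b = 0 ->
  phi *m quad_mx (S2 l *m S3 m) (ga - 2) = 0.
Proof.
move=> phib; have wE : cv3 (4 - l * m) (l + 2) (m + 2) = b by rewrite bvecE lm_ga.
by rewrite -lm_ga quad_mx_S2S3 mulmxA wE phib mul0mx.
Qed.

Lemma S1S2_orbit lam1 lam2 : 4 - al != 0 ->
  2 *: ((phiv (lam1 *: c1 al be) *m S2 l + phiv (lam2 *: c2 l)) *m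
        ((3 - al)%:M + S1 al be *m S2 l)) =
  (4 - al) *: phiv (pair2 (- 2 * lam2) (2 * (2 * be + al * l) / (4 - al) * lam1
                                        + 2 * (be + 2 * l) / (4 - al) * lam2)).
Proof.
move=> al_neq4; have m2 := m_add2_neq0 al_neq4.
have lm_neq4 : 4 - l * m != 0 by rewrite lm_ga.
by rewrite /phiv !mxE /= (beE m2) -lm_ga; mx3_normalize; congr row3; field;
  rewrite ?al_neq4 ?m2 ?lm_neq4.
Qed.

Lemma S1S3_orbit lam1 lam3 : 4 - be != 0 ->
  2 *: ((phiv (lam1 *: c1 al be) *m S3 m + phiv (lam3 *: c3 m)) *m
        ((3 - be)%:M + S1 al be *m S3 m)) =
  (4 - be) *: phiv (pair2 (2 * (2 * al + be * m) / (4 - be) * lam1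
                           + 2 * (al + 2 * m) / (4 - be) * lam3) (- 2 * lam3)).
Proof.
move=> be_neq4; have l2 := l_add2_neq0 be_neq4.
have lm_neq4 : 4 - l * m != 0 by rewrite lm_ga.
by rewrite /phiv !mxE /= (alE l2) -lm_ga; mx3_normalize; congr row3; field;
  rewrite ?be_neq4 ?l2 ?lm_neq4.
Qed.

Lemma S2S3_orbit lam2 lam3 :
  2 *: ((phiv (lam2 *: c2 l) *m S3 m + phiv (lam3 *: c3 m)) *m
        ((3 - ga)%:M + S2 l *m S3 m)) =
  (4 - ga) *: phiv (pair2 (- 2 * lam2) (- 2 * lam3)).
Proof.
have lm_neq4 : 4 - l * m != 0 by rewrite lm_ga.
by rewrite /phiv !mxE /= -lm_ga; mx3_normalize; congr row3; field; rewrite ?lm_neq4.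
Qed.

Lemma perturbed_coxeter_power s s' nu nu' P P' Q p k z :
  (2 < p)%N -> p.-primitive_root z -> p = (2 * k)%N ->
  inG al be ga l m s -> inG al be ga l m s' -> s *m s = 1%:M -> s' *m s' = 1%:M ->
  (forall phi, phi *m b = 0 -> phi *m quad_mx (s *m s') (cos2_param z - 2) = 0) ->
  2 *: ((phiv P *m s' + phiv P') *m ((3 - cos2_param z)%:M + s *m s')) =
    (4 - cos2_param z) *: phiv Q ->
  inN_with al be ga l m nu P -> inN_with al be ga l m nu' P' ->
  exists nuM : 'M[C]_3, inN_with al be ga l m nuM Q /\
    (s *m nu *m (s' *m nu')) ^+ k = (s *m s') ^+ k *m nuM.
Proof.
move=> p_gt2 prim_z p_2k Gs Gs' ssK s's'K quad_orth orbitE Nnu Nnu'.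
set t := s *m s'; set phi := phiv P *m s' + phiv P'.
have s'b := inG_fix Gs'.
have tb : t *m b = b by rewrite -mulmxA s'b (inG_fix Gs).
have phib : phi *m b = 0 by rewrite mulmxDl -mulmxA s'b !phiv_orth addr0.
have orbitQ : orbit_sum t phi k = phiv Q.
  apply: (scalerI (cos2_param_neq4 p_gt2 prim_z)); rewrite -orbitE.
  have := orbit_sum_half_turn (prim_root_neq0 p_gt2 prim_z)
    (prim_root_sqr_neq1 p_gt2 prim_z) (prim_root_half p_gt2 prim_z p_2k)
    (cos2_param_sub2 z) (quad_orth _ phib).
  have -> : 2 - (cos2_param z - 2) = 4 - cos2_param z by ring.
  by have -> : 1 - (cos2_param z - 2) = 3 - cos2_param z by ring.
have powE : (s *m nu *m (s' *m nu')) ^+ k = t ^+ k *m transv b (phiv Q).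
  rewrite (inN_withE Nnu) (inN_withE Nnu') transv_mulmx_mul ?phiv_orth //.
  by rewrite expr_mulmx_transv // orbitQ.
exists (transv b (phiv Q)); split=> //.
have [Qb Q1 Q2] := transv_phiv Q; split=> //.
(* (s' s)^k inverts t^k, so the element lies in G. *)
have tK : (s' *m s) ^+ k *m t ^+ k = 1%:M.
  have s's_t : s' *m s *m t = 1%:M by rewrite mulmxA -(mulmxA s') ssK mulmx1.
  have t_s's : t *m (s' *m s) = 1%:M by rewrite mulmxA -(mulmxA s) s's'K mulmx1.
  rewrite mulmxE -exprMn_comm; last by rewrite /GRing.comm -!mulmxE s's_t t_s's.
  by rewrite -mulmxE s's_t expr1n.
rewrite -[transv _ _]mul1mx -tK -mulmxA -powE.
case: Nnu Nnu' => Gnu _ _ _ [Gnu' _ _ _].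
exact: genGM (genGX _ (genGM Gs' Gs)) (genGX _ (genGM (genGM Gs Gnu) (genGM Gs' Gnu'))).
Qed.

Lemma nu12E lam1 lam2 : 4 - al != 0 ->
  (2 / (4 - al)) *: ((2 * lam1 + lam2) *: c1 al be + (al * lam1 + 2 * lam2) *: c2 l) =
  pair2 (- 2 * lam2) (2 * (2 * be + al * l) / (4 - al) * lam1
                      + 2 * (be + 2 * l) / (4 - al) * lam2).
Proof. by move=> al_neq4; apply/rowP => -[[|[|//]] ?]; rewrite !mxE /=; field. Qed.

Lemma nu13E lam1 lam3 : 4 - be != 0 ->
  (2 / (4 - be)) *: ((2 * lam1 + lam3) *: c1 al be + (be * lam1 + 2 * lam3) *: c3 m) =
  pair2 (2 * (2 * al + be * m) / (4 - be) * lam1 + 2 * (al + 2 * m) / (4 - be) * lam3)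
        (- 2 * lam3).
Proof. by move=> be_neq4; apply/rowP => -[[|[|//]] ?]; rewrite !mxE /=; field. Qed.

Lemma nu23E lam2 lam3 :
  (2 / (4 - ga)) *: ((2 * lam2 + m * lam3) *: c2 l + (l * lam2 + 2 * lam3) *: c3 m) =
  pair2 (- 2 * lam2) (- 2 * lam3).
Proof.
have lm_neq4 : 4 - l * m != 0 by rewrite lm_ga.
by apply/rowP => -[[|[|//]] ?]; rewrite !mxE /= -lm_ga; field.
Qed.

End ReducibleRepresentation.

Theorem corollary2 (C : numClosedFieldType) (p q r : nat) (z1 z2 z3 l m : C)
    (lam1 lam2 lam3 : C) (nu1 nu2 nu3 : 'M[C]_3) :
  (3 <= p)%N -> (3 <= q)%N -> (3 <= r)%N ->
  p.-primitive_root z1 -> q.-primitive_root z2 -> r.-primitive_root z3 ->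
  let al := cos2_param z1 in
  let be := cos2_param z2 in
  let ga := cos2_param z3 in
  l * m = ga ->
  Delta al be ga l m = 0 ->
  inN_with al be ga l m nu1 (lam1 *: c1 al be) ->
  inN_with al be ga l m nu2 (lam2 *: c2 l) ->
  inN_with al be ga l m nu3 (lam3 *: c3 m) ->
  let s1 := S1 al be in let s2 := S2 l in let s3 := S3 m in
  let s1' := s1 *m nu1 in let s2' := s2 *m nu2 in let s3' := s3 *m nu3 in
  [/\ forall p1 : nat, p = (2 * p1)%N ->
        let nu := (2 / (4 - al)) *:
                    ((2 * lam1 + lam2) *: c1 al be + (al * lam1 + 2 * lam2) *: c2 l) in
        nu = pair2 (- 2 * lam2)
                   (2 * (2 * be + al * l) / (4 - al) * lam1
                    + 2 * (be + 2 * l) / (4 - al) * lam2) /\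
        exists nuM : 'M[C]_3, inN_with al be ga l m nuM nu /\
          (s1' *m s2') ^+ p1 = (s1 *m s2) ^+ p1 *m nuM,
      forall q1 : nat, q = (2 * q1)%N ->
        let nu' := (2 / (4 - be)) *:
                    ((2 * lam1 + lam3) *: c1 al be + (be * lam1 + 2 * lam3) *: c3 m) in
        nu' = pair2 (2 * (2 * al + be * m) / (4 - be) * lam1
                     + 2 * (al + 2 * m) / (4 - be) * lam3)
                    (- 2 * lam3) /\
        exists nuM : 'M[C]_3, inN_with al be ga l m nuM nu' /\
          (s1' *m s3') ^+ q1 = (s1 *m s3) ^+ q1 *m nuM &
      forall r1 : nat, r = (2 * r1)%N ->
        let nu'' := (2 / (4 - ga)) *:
                    ((2 * lam2 + m * lam3) *: c2 l + (l * lam2 + 2 * lam3) *: c3 m) in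
        nu'' = pair2 (- 2 * lam2) (- 2 * lam3) /\
        exists nuM : 'M[C]_3, inN_with al be ga l m nuM nu'' /\
          (s2' *m s3') ^+ r1 = (s2 *m s3) ^+ r1 *m nuM].
Proof.
move=> p_gt2 q_gt2 r_gt2 prim1 prim2 prim3 al be ga lm_ga Delta0 N1 N2 N3.
move=> s1 s2 s3 s1' s2' s3'.
have ga_neq4 : 4 - ga != 0 := cos2_param_neq4 r_gt2 prim3.
have al_neq4 : 4 - al != 0 := cos2_param_neq4 p_gt2 prim1.
have be_neq4 : 4 - be != 0 := cos2_param_neq4 q_gt2 prim2.
split=> [p1 p_2p1 | q1 q_2q1 | r1 r_2r1] /=.
- rewrite nu12E //; split=> //.
  exact (perturbed_coxeter_power ga_neq4 Delta0 lm_ga p_gt2 prim1 p_2p1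
    (genGT1 _ _ _) (genGT2 _ _ _) (S1K _ _) (S2K _) (quad_mx_S1S2_orth ga_neq4 Delta0 lm_ga al_neq4)
    (S1S2_orbit ga_neq4 Delta0 lm_ga lam1 lam2 al_neq4) N1 N2).
- rewrite nu13E //; split=> //.
  exact (perturbed_coxeter_power ga_neq4 Delta0 lm_ga q_gt2 prim2 q_2q1
    (genGT1 _ _ _) (genGT3 _ _ _) (S1K _ _) (S3K _) (quad_mx_S1S3_orth ga_neq4 Delta0 lm_ga be_neq4)
    (S1S3_orbit ga_neq4 Delta0 lm_ga lam1 lam3 be_neq4) N1 N3).
- rewrite nu23E //; split=> //.
  exact (perturbed_coxeter_power ga_neq4 Delta0 lm_ga r_gt2 prim3 r_2r1
    (genGT2 _ _ _) (genGT3 _ _ _) (S2K _) (S3K _) (quad_mx_S2S3_orth lm_ga)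
    (S2S3_orbit ga_neq4 lm_ga lam2 lam3) N2 N3).
Qed.
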